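(* Let $k\ge2$ be an integer. For every integer $n>k-1$, $$D_k(n)+D_{k-1}(n)=D_{k-1}(n-k+1)+2A(n).$$
   Context: $A(n)$ is the number of partitions of $n$ into distinct parts. For $j\ge1$, $D_j(n)$ is the number of partitions of $n$ into non-negative parts (the part $0$ is allowed) in which the smallest part appears exactly $j$ times and no other part is repeated, with $D_j(0)=1$. *)

From mathcomp Require Import all_boot.
Set Implicit Arguments. Unset Strict Implicit. Unset Printing Implicit Defensive.

(* A partition is represented canonically as a nonincreasing list of its parts. *)

Fixpoint lists (L b : nat) : seq (seq nat) :=
  match L with
  | 0 => [:: [::]]
  | L'.+1 => [::] :: [seq x :: s | x <- iota 0 b.+1, s <- lists L' b]
  end.

Definition is_distinct_partition (n : nat) (s : seq nat) : bool :=
  [&& sorted geq s, sumn s == n, all (fun x => 0 < x) s & uniq s].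

(* s is a partition of n into non-negative parts (0 allowed) whose smallest
   part appears exactly j times and no other part is repeated *)
Definition is_Dj_partition (j n : nat) (s : seq nat) : bool :=
  let m := last 0 s in (* smallest part, since s is nonincreasing *)
  [&& sorted geq s, sumn s == n, s != [::], count_mem m s == j
    & uniq (filter (predC1 m) s)].

(* Every partition of n into distinct positive parts has at most n parts,
   each <= n, so it appears in [lists n n]. *)
Definition A (n : nat) : nat := count (is_distinct_partition n) (lists n n).

(* Every D_j-partition of n has at most j zeros and at most n positive parts,
   all <= n, so it appears in [lists (n + j) n]. *)
Definition D (j n : nat) : nat := count (is_Dj_partition j n) (lists (n + j) n).

From mathcomp Require Import all_boot zify.
Set Implicit Arguments. Unset Strict Implicit. Unset Printing Implicit Defensive.

(* Every D_c-partition of N is t ++ nseq c m, with t strictly decreasing and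
   all parts of t larger than the smallest part m.  Those with m = 0 are the
   distinct partitions of N with c zeros appended; this accounts for the two
   copies of A(n).  Replacing the j = k - 1 copies of m by j copies of m + 1
   maps D_j(n - j) bijectively onto the D_j(n)- and D_(j+1)(n)-partitions with
   positive smallest part: m + 1 becomes the smallest part, with multiplicity
   j + 1 if it already occurs in t and j otherwise. *)

Lemma count_split (T : Type) (a b : pred T) (s : seq T) :
  count a s = count (fun x => b x && a x) s + count (fun x => ~~ b x && a x) s.
Proof. by rewrite -size_filter -(count_predC b) !count_filter. Qed.

Lemma count_bij (T1 T2 : eqType) (P1 : pred T1) (P2 : pred T2)
    (s1 : seq T1) (s2 : seq T2) (f : T1 -> T2) (g : T2 -> T1) :
  uniq s1 -> uniq s2 ->
  (forall x, x \in s1 -> P1 x -> [/\ f x \in s2, P2 (f x) & g (f x) = x]) ->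
  (forall y, y \in s2 -> P2 y -> [/\ g y \in s1, P1 (g y) & f (g y) = y]) ->
  count P1 s1 = count P2 s2.
Proof.
move=> uniq_s1 uniq_s2 fP gP; rewrite -!size_filter -(size_map f).
apply/perm_size/uniq_perm; last 1 first.
- move=> y; rewrite mem_filter; apply/mapP/andP => [[x] | [P2y s2y]].
    by rewrite mem_filter => /andP[P1x s1x] ->; have [-> ->] := fP x s1x P1x.
  have [s1gy P1gy fgy] := gP y s2y P2y.
  by exists (g y); rewrite ?mem_filter ?P1gy ?s1gy.
- rewrite map_inj_in_uniq ?filter_uniq //; apply: (can_in_inj (g := g)) => x.
  by rewrite mem_filter => /andP[P1x s1x]; have [] := fP x s1x P1x.
- exact: filter_uniq.
Qed.

Lemma eq_count_uniq (T : eqType) (P : pred T) (s1 s2 : seq T) :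
  uniq s1 -> uniq s2 -> {subset P <= s1} -> {subset P <= s2} ->
  count P s1 = count P s2.
Proof.
move=> uniq_s1 uniq_s2 Ps1 Ps2.
by apply: (count_bij (f := id) (g := id)) => // x _ Px; split; rewrite ?Ps1 ?Ps2.
Qed.

Lemma listsS L b :
  lists L.+1 b = [::] :: [seq x :: s | x <- iota 0 b.+1, s <- lists L b].
Proof. by []. Qed.

Lemma mem_lists L b s :
  (s \in lists L b) = (size s <= L) && all (fun x => x <= b) s.
Proof.
elim: L s => [|L IH] [|x s] //; rewrite listsS in_cons //.
apply/allpairsP/andP => [[[y t] []] | [size_s /andP[le_xb all_s]]].
  rewrite mem_iota ltnS IH => /= le_yb /andP[size_t all_t] [-> ->] /=.
  by rewrite ltnS size_t le_yb.
by exists (x, s); rewrite mem_iota ltnS IH; split => //; apply/andP.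
Qed.

Lemma uniq_lists L b : uniq (lists L b).
Proof.
elim: L => [|L IH] //; rewrite listsS cons_uniq; apply/andP; split.
  by apply/negP; case/allpairsP => [[y t] [_ _]].
apply: allpairs_uniq => //; first exact: iota_uniq.
by move=> [x1 s1] [x2 s2] _ _ /= [-> ->].
Qed.

Lemma mem_leq_sumn x s : x \in s -> x <= sumn s.
Proof.
elim: s => //= y s IH; rewrite in_cons => /predU1P[-> | /IH]; first exact: leq_addr.
by move/leq_trans; apply; apply: leq_addl.
Qed.

Lemma size_leq_sumn s : all (fun x => 0 < x) s -> size s <= sumn s.
Proof.
by elim: s => //= x s IH /andP[x_gt0 /IH]; rewrite -add1n; apply: leq_add.
Qed.

Lemma mem_lists_sumn L b s : size s <= L -> sumn s <= b -> s \in lists L b.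
Proof.
move=> size_s sum_s; rewrite mem_lists size_s.
by apply/allP => x /mem_leq_sumn /leq_trans; apply.
Qed.

Lemma path_geq_last x s : path geq x s -> all (fun y => last x s <= y) (x :: s).
Proof.
elim: s x => [|y s IH] x /=; first by rewrite leqnn.
by case/andP=> le_yx /IH /= /andP[le_y ->]; rewrite le_y (leq_trans le_y).
Qed.

Lemma sorted_geq_last s : sorted geq s -> all (fun y => last 0 s <= y) s.
Proof. by case: s => //= x s; apply: path_geq_last. Qed.

Lemma last_cat_nseq (T : Type) (x : T) t c m : 0 < c -> last x (t ++ nseq c m) = m.
Proof. by case: c => // c _; rewrite last_cat /=; elim: c. Qed.

Lemma path_geq_nseq x c m : m <= x -> path geq x (nseq c m).
Proof. by elim: c x => //= c IH x ->; apply: IH. Qed.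

Lemma sorted_geq_cat_nseq t c m :
  sorted geq t -> all (fun x => m <= x) t -> sorted geq (t ++ nseq c m).
Proof.
case: t => [_ _ | x t sorted_t all_t].
  by case: c => //= c; apply: path_geq_nseq.
rewrite /= cat_path; apply/andP; split=> //.
exact/path_geq_nseq/(allP all_t)/mem_last.
Qed.

Lemma sorted_geq_filter_cat t m : sorted geq t -> all (fun x => m <= x) t ->
  t = filter (predC1 m) t ++ nseq (count_mem m t) m.
Proof.
elim: t => //= x t IH sorted_xt /andP[le_mx all_t].
case: eqVneq sorted_xt => [-> | _] sorted_xt /=; last first.
  by rewrite -IH ?(path_sorted sorted_xt).
have /all_pred1P -> : all (pred1 m) t.
  apply/allP => y y_t; rewrite /= eqn_leq (allP all_t y y_t) andbT.
  exact: allP (order_path_min (rev_trans leq_trans) sorted_xt) y y_t.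
by rewrite filter_nseq count_nseq /= eqxx mul0n mul1n.
Qed.

Lemma count_mem_all_gt m t : all (fun x => m < x) t -> count_mem m t = 0.
Proof. by move=> all_t; apply/count_memPn/negP => /(allP all_t); rewrite ltnn. Qed.

Lemma filter_all_gt m t : all (fun x => m < x) t -> filter (predC1 m) t = t.
Proof.
move=> all_t; apply/all_filterP/allP => x /(allP all_t).
by rewrite /= neq_ltn => ->; rewrite orbT.
Qed.

Definition is_Dj_pos_partition (c N : nat) (s : seq nat) : bool :=
  is_Dj_partition c N s && (0 < last 0 s).

Lemma Dj_partition_count c N s :
  is_Dj_partition c N s -> count_mem (last 0 s) s = c.
Proof. by case/and5P=> _ _ _ /eqP. Qed.

Lemma Dj_partition_cat c m t :
  0 < c -> sorted geq t -> uniq t -> all (fun x => m <= x) t ->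
  is_Dj_partition (c + count_mem m t) (sumn t + c * m) (t ++ nseq c m).
Proof.
move=> c_gt0 sorted_t uniq_t all_t; rewrite /is_Dj_partition last_cat_nseq //.
apply/and5P; split.
- exact: sorted_geq_cat_nseq.
- by rewrite sumn_cat sumn_nseq mulnC.
- by case: t {sorted_t uniq_t all_t} => //; case: c c_gt0.
- by rewrite count_cat count_nseq /= eqxx mul1n addnC.
- by rewrite filter_cat filter_nseq /= eqxx mul0n cats0 filter_uniq.
Qed.

Lemma Dj_partition_decomp c N s : is_Dj_partition c N s ->
  let m := last 0 s in let t := filter (predC1 m) s in
  [/\ sorted geq t, uniq t, all (fun x => m < x) t, s = t ++ nseq c m
    & sumn t + c * m = N].
Proof.
move=> /and5P[sorted_s /eqP sum_s _ /eqP count_s uniq_t] m t.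
have def_s : s = t ++ nseq c m.
  by rewrite -count_s; apply/sorted_geq_filter_cat/sorted_geq_last.
split=> //.
- exact: (sorted_filter (rev_trans leq_trans)).
- apply/allP => x; rewrite mem_filter => /andP[/= ne_xm s_x].
  by rewrite ltn_neqAle eq_sym ne_xm (allP (sorted_geq_last sorted_s)).
- by rewrite -sum_s [in RHS]def_s sumn_cat sumn_nseq mulnC.
Qed.

Lemma Dj_partition_lists c N L b s :
  is_Dj_partition c N s -> N + c <= L -> N <= b -> s \in lists L b.
Proof.
move=> sD le_L le_b; have [_ _ all_t def_s sum_s] := Dj_partition_decomp sD.
have /size_leq_sumn size_t : all (fun x => 0 < x) (filter (predC1 (last 0 s)) s).
  by apply: sub_all all_t => x; apply: leq_ltn_trans.
apply: mem_lists_sumn; last by case/and5P: sD => _ /eqP ->.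
rewrite def_s size_cat size_nseq; lia.
Qed.

Lemma distinct_partition_lists N L b s :
  is_distinct_partition N s -> N <= L -> N <= b -> s \in lists L b.
Proof.
case/and4P=> _ /eqP sum_s /size_leq_sumn size_s _ le_L le_b.
by apply: mem_lists_sumn; rewrite ?sum_s // (leq_trans size_s) ?sum_s.
Qed.

Lemma D_lists c N L b :
  N + c <= L -> N <= b -> D c N = count (is_Dj_partition c N) (lists L b).
Proof.
move=> le_L le_b; apply: eq_count_uniq; try exact: uniq_lists.
  by move=> s /Dj_partition_lists; apply.
by move=> s /Dj_partition_lists; apply.
Qed.

Lemma A_lists N L b :
  N <= L -> N <= b -> A N = count (is_distinct_partition N) (lists L b).
Proof.
move=> le_L le_b; apply: eq_count_uniq; try exact: uniq_lists.
  by move=> s /distinct_partition_lists; apply.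
by move=> s /distinct_partition_lists; apply.
Qed.

Lemma count_Dj_zero c N L b : 0 < c -> N + c <= L -> N <= b ->
  count (fun s => (last 0 s == 0) && is_Dj_partition c N s) (lists L b)
  = count (is_distinct_partition N) (lists L b).
Proof.
move=> c_gt0 le_L le_b.
apply: (count_bij (f := filter (predC1 0)) (g := cat^~ (nseq c 0)));
  try exact: uniq_lists.
  move=> s _ /andP[/eqP s0 sD].
  have [sorted_t uniq_t all_t def_s sum_s] := Dj_partition_decomp sD.
  rewrite s0 muln0 addn0 in sorted_t uniq_t all_t def_s sum_s.
  have tD : is_distinct_partition N (filter (predC1 0) s).
    by apply/and4P; rewrite sum_s.
  by split=> //; apply: distinct_partition_lists tD _ _; lia.
move=> t _ tD; have /and4P[sorted_t /eqP sum_t all_t uniq_t] := tD.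
have := Dj_partition_cat (m := 0) c_gt0 sorted_t uniq_t
  (sub_all (fun x _ => leq0n x) all_t).
rewrite count_mem_all_gt // muln0 !addn0 sum_t => sD.
split.
- exact: Dj_partition_lists sD le_L le_b.
- by rewrite sD last_cat_nseq.
- by rewrite filter_cat filter_nseq /= cats0 filter_all_gt.
Qed.

Lemma count_Dj_partition c N L b : 0 < c -> N + c <= L -> N <= b ->
  count (is_Dj_partition c N) (lists L b)
  = count (is_distinct_partition N) (lists L b)
    + count (is_Dj_pos_partition c N) (lists L b).
Proof.
move=> c_gt0 le_L le_b; rewrite (count_split _ (fun s => last 0 s == 0)).
rewrite count_Dj_zero //; congr (_ + _); apply: eq_count => s.
by rewrite /is_Dj_pos_partition eqn0Ngt negbK andbC.
Qed.

Definition raise_smallest (j : nat) (s : seq nat) : seq nat :=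
  let m := last 0 s in filter (predC1 m) s ++ nseq j m.+1.

(* A multiplicity j + 1 of the smallest part m means that m was a part before
   raising; that copy of m is kept. *)
Definition lower_smallest (j : nat) (s : seq nat) : seq nat :=
  let m := last 0 s in
  filter (predC1 m) s ++ nseq (count_mem m s - j) m ++ nseq j m.-1.

Lemma raise_smallestP j N s : 0 < j -> is_Dj_partition j N s ->
  is_Dj_pos_partition (j + ((last 0 s).+1 \in s)) (N + j) (raise_smallest j s)
  /\ lower_smallest j (raise_smallest j s) = s.
Proof.
move=> j_gt0 sD; have [sorted_t uniq_t all_t def_s sum_s] := Dj_partition_decomp sD.
rewrite /raise_smallest /lower_smallest.
set m := last 0 s in sorted_t uniq_t all_t def_s sum_s *.
set t := filter (predC1 m) s in sorted_t uniq_t all_t def_s sum_s *.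
have mem_s : (m.+1 \in s) = (m.+1 \in t).
  by rewrite {1}def_s mem_cat mem_nseq eqn_leq ltnn !andbF orbF.
have := Dj_partition_cat (m := m.+1) j_gt0 sorted_t uniq_t all_t.
have -> : sumn t + j * m.+1 = N + j by rewrite mulnS; lia.
rewrite (count_uniq_mem _ uniq_t) -mem_s => rD.
split; first by rewrite /is_Dj_pos_partition rD last_cat_nseq.
rewrite last_cat_nseq // filter_cat filter_nseq /= eqxx mul0n cats0.
rewrite count_cat count_nseq /= eqxx mul1n addnK catA.
by rewrite -sorted_geq_filter_cat // -def_s.
Qed.

Lemma lower_smallestP j (d : bool) N s :
  0 < j -> is_Dj_pos_partition (j + d) (N + j) s ->
  is_Dj_partition j N (lower_smallest j s)
  /\ raise_smallest j (lower_smallest j s) = s.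
Proof.
move=> j_gt0 /andP[sD m_gt0].
have [sorted_t uniq_t all_t def_s sum_s] := Dj_partition_decomp sD.
rewrite /raise_smallest /lower_smallest (Dj_partition_count sD) addKn catA.
set m := last 0 s in m_gt0 sorted_t uniq_t all_t def_s sum_s *.
set t := filter (predC1 m) s in sorted_t uniq_t all_t def_s sum_s *.
set t' := t ++ nseq d m.
have sorted_t' : sorted geq t'.
  by apply: sorted_geq_cat_nseq => //; apply: sub_all all_t => x /ltnW.
have uniq_t' : uniq t'.
  rewrite /t'; case: (d); last by rewrite cats0.
  rewrite cat_uniq uniq_t /= orbF andbT.
  by apply/negP => /(allP all_t); rewrite ltnn.
have all_t' : all (fun x => m.-1 < x) t'.
  rewrite all_cat all_nseq prednK // leqnn orbT andbT.
  by apply: sub_all all_t => x /ltnW.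
have := Dj_partition_cat (m := m.-1) j_gt0 sorted_t' uniq_t'
  (sub_all (fun x => @ltnW _ _) all_t').
have sum_t' : sumn t' + j * m.-1 = N.
  have jm : j * m = j * m.-1 + j by rewrite -mulnSr prednK.
  move: sum_s; rewrite /t' sumn_cat sumn_nseq mulnDl jm mulnC; lia.
rewrite count_mem_all_gt // addn0 sum_t' => lD.
split=> //.
rewrite last_cat_nseq // filter_cat filter_nseq /= eqxx mul0n cats0 filter_all_gt //.
by rewrite prednK // /t' -catA -nseqD def_s addnC.
Qed.

Lemma count_Dj_shift j N L b : 0 < j -> N + j + j.+1 <= L -> N + j <= b ->
  count (is_Dj_partition j N) (lists L b)
  = count (is_Dj_pos_partition j (N + j)) (lists L b)
    + count (is_Dj_pos_partition j.+1 (N + j)) (lists L b).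
Proof.
move=> j_gt0 le_L le_b.
have disjoint_pos : count (predI (is_Dj_pos_partition j (N + j))
    (is_Dj_pos_partition j.+1 (N + j))) (lists L b) = 0.
  rewrite -(count_pred0 (lists L b)); apply: eq_count => s /=.
  apply/negP => /andP[/andP[/Dj_partition_count cnt_j _] /andP[]].
  by move=> /Dj_partition_count; rewrite cnt_j => /n_Sn.
rewrite -count_predUI disjoint_pos addn0.
apply: (count_bij (f := raise_smallest j) (g := lower_smallest j));
  try exact: uniq_lists.
  move=> s _ sD; have [rD rK] := raise_smallestP j_gt0 sD.
  split=> //; last first.
    by case: (_ \in s) rD => /=; rewrite ?addn0 ?addn1 => ->; rewrite ?orbT.
  by apply: Dj_partition_lists (andP rD).1 _ le_b; case: (_ \in s); lia.
move=> s _ /orP sD.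
have [d sDd] : exists d : bool, is_Dj_pos_partition (j + d) (N + j) s.
  by case: sD => ?; [exists false; rewrite addn0 | exists true; rewrite addn1].
have [lD lK] := lower_smallestP j_gt0 sDd.
by split=> //; apply: Dj_partition_lists lD _ _; lia.
Qed.

Theorem theorem12 (k n : nat) :
  2 <= k -> k - 1 < n ->
  D k n + D (k - 1) n = D (k - 1) (n - (k - 1)) + 2 * A n.
Proof.
case: k => [|j] //; rewrite ltnS subn1 /= => j_gt0 lt_jn.
rewrite -(subnK (ltnW lt_jn)) addnK; move: (n - j) => N.
rewrite !(@D_lists _ _ (N + j + j.+1) (N + j)) ?(@A_lists _ (N + j + j.+1) (N + j));
  try lia.
rewrite (count_Dj_shift (N := N)) // !count_Dj_partition //; lia.
Qed.
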